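(* Let $\mathbf{c}\in H_{1,2,2}$ be primitive and let $p$ be a rational prime dividing $N(\mathbf{c})$. Then any left greatest common divisor of $\mathbf{c}$ and $p$ is a prime of $H_{1,2,2}$, and there is a unique primary element among the left greatest common divisors of $\mathbf{c}$ and $p$.
   Context: Let $\mathbf{i},\mathbf{j},\mathbf{k}$ be the standard quaternion units; $\overline{\mathbf{q}}$ is quaternion conjugation and $N(\mathbf{q})=\mathbf{q}\overline{\mathbf{q}}$. $H_{1,2,2}$ is the subring of the quaternions equal to the $\mathbb{Z}$-module generated by $\mathbf{v}_1=1$, $\mathbf{v}_2=\mathbf{i}$, $\mathbf{v}_3=\tfrac12(1+\mathbf{i}+\sqrt2\,\mathbf{j})$, $\mathbf{v}_4=\tfrac12(1+\mathbf{i}+\sqrt2\,\mathbf{k})$; it is norm Euclidean, so any two nonzero elements $\mathbf{a},\mathbf{b}$ have a left greatest common divisor $\mathbf{d}$: $\mathbf{a}=\mathbf{d}\mathbf{a}'$, $\mathbf{b}=\mathbf{d}\mathbf{b}'$ for some $\mathbf{a}',\mathbf{b}'\in H_{1,2,2}$ and $\mathbf{d}=\mathbf{a}\mathbf{x}+\mathbf{b}\mathbf{y}$ for some $\mathbf{x},\mathbf{y}\in H_{1,2,2}$; it is unique up to right multiplication by units (invertible elements). A prime of $H_{1,2,2}$ is a nonzero nonunit $\boldsymbol\pi$ such that any factorization $\boldsymbol\pi=\mathbf{a}\mathbf{b}$ in $H_{1,2,2}$ has $\mathbf{a}$ or $\mathbf{b}$ a unit. Let $I=2(1+\mathbf{i})H_{1,2,2}$.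 An element $\mathbf{q}$ is primary if $\mathbf{q}-1\in I$ or $\mathbf{q}-(1+2\mathbf{v}_3)\in I$. An element $\mathbf{c}=c_1\mathbf{v}_1+c_2\mathbf{v}_2+c_3\mathbf{v}_3+c_4\mathbf{v}_4$ ($c_i\in\mathbb{Z}$) is primitive if it is primary and $\gcd(c_1,c_2,c_3,c_4)=1$. *)

From mathcomp Require Import all_boot all_order all_algebra.
From mathcomp Require Import Rstruct.
Set Implicit Arguments. Unset Strict Implicit. Unset Printing Implicit Defensive.
Import Order.TTheory GRing.Theory Num.Theory.
Local Open Scope ring_scope.

Notation RR := Rdefinitions.R.

Record quat := Quat { q0 : RR; q1 : RR; q2 : RR; q3 : RR }.

Definition qadd (a b : quat) : quat :=
  Quat (q0 a + q0 b) (q1 a + q1 b) (q2 a + q2 b) (q3 a + q3 b).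
Definition qopp (a : quat) : quat := Quat (- q0 a) (- q1 a) (- q2 a) (- q3 a).
Definition qsub (a b : quat) : quat := qadd a (qopp b).
(* Hamilton product: i^2 = j^2 = k^2 = ijk = -1 *)
Definition qmul (a b : quat) : quat :=
  Quat (q0 a * q0 b - q1 a * q1 b - q2 a * q2 b - q3 a * q3 b)
       (q0 a * q1 b + q1 a * q0 b + q2 a * q3 b - q3 a * q2 b)
       (q0 a * q2 b - q1 a * q3 b + q2 a * q0 b + q3 a * q1 b)
       (q0 a * q3 b + q1 a * q2 b - q2 a * q1 b + q3 a * q0 b).
Definition qscal (r : RR) : quat := Quat r 0 0 0.
Definition qconj (a : quat) : quat := Quat (q0 a) (- q1 a) (- q2 a) (- q3 a).
Definition qN (a : quat) : quat := qmul a (qconj a).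

Definition qone : quat := qscal 1.
Definition qzero : quat := qscal 0.
Definition qi : quat := Quat 0 1 0 0.
Definition qj : quat := Quat 0 0 1 0.
Definition qk : quat := Quat 0 0 0 1.

Definition qzmul (n : int) (a : quat) : quat :=
  Quat (n%:~R * q0 a) (n%:~R * q1 a) (n%:~R * q2 a) (n%:~R * q3 a).

Definition s2 : RR := Num.sqrt 2.
Definition v1 : quat := qone.
Definition v2 : quat := qi.
Definition v3 : quat := Quat (1/2) (1/2) (s2/2) 0.
Definition v4 : quat := Quat (1/2) (1/2) 0 (s2/2).

Definition comb (c1 c2 c3 c4 : int) : quat :=
  qadd (qadd (qzmul c1 v1) (qzmul c2 v2)) (qadd (qzmul c3 v3) (qzmul c4 v4)).

Definition inH (q : quat) : Prop := exists c1 c2 c3 c4 : int, q = comb c1 c2 c3 c4.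

Definition unitH (u : quat) : Prop :=
  inH u /\ exists v, inH v /\ qmul u v = qone /\ qmul v u = qone.

Definition primeH (p : quat) : Prop :=
  inH p /\ p <> qzero /\ ~ unitH p /\
  forall a b, inH a -> inH b -> p = qmul a b -> unitH a \/ unitH b.

Definition lgcd (a b d : quat) : Prop :=
  inH d /\
  (exists a' b', inH a' /\ inH b' /\ a = qmul d a' /\ b = qmul d b') /\
  (exists x y, inH x /\ inH y /\ d = qadd (qmul a x) (qmul b y)).

Definition inI (q : quat) : Prop :=
  exists h, inH h /\ q = qmul (qzmul 2 (qadd qone qi)) h.

Definition primary (q : quat) : Prop :=
  inI (qsub q qone) \/ inI (qsub q (qadd qone (qzmul 2 v3))).

Definition primitive (c : quat) : Prop :=
  primary c /\
  exists c1 c2 c3 c4 : int,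
    c = comb c1 c2 c3 c4 /\ gcdz (gcdz c1 c2) (gcdz c3 c4) = 1.

From HB Require Import structures.
From mathcomp Require Import all_boot all_order all_algebra Rstruct.
From mathcomp Require Import ring lra zify.
Set Implicit Arguments. Unset Strict Implicit. Unset Printing Implicit Defensive.
Import Order.TTheory GRing.Theory Num.Theory.
Local Open Scope ring_scope.

(* In integer coordinates with respect to v1, ..., v4, H_{1,2,2} is a
   norm-Euclidean ring with a conjugation and a multiplicative integral norm N.
   A left gcd d of c and p divides p, so N(d) is 1, p or p^2; the two extreme
   cases would make c divisible by p, contradicting primitivity.  Hence
   N(d) = p and d is prime.  Left gcds are right associates of each other, and
   an element of odd norm (N(d) = p is odd since primary elements have odd
   norm) has exactly one primary right associate: primarity only depends on
   the residue modulo 4, which reduces this to a finite computation over the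
   256 residues and the 24 units. *)

(** * Integer arithmetic *)

Lemma int_mul_eq1 (a b : int) : 0 <= a -> 0 <= b -> a * b = 1 -> a = 1.
Proof.
case: a b => [a|//] [b|//] _ _ /eqP; rewrite -PoszM eqz_nat muln_eq1.
by case/andP => /eqP ->.
Qed.

Lemma int_mul_eq_prime (a b : int) (p : nat) : prime p -> 0 <= a -> 0 <= b ->
  a * b = p%:Z -> a = 1 \/ b = 1.
Proof.
case: a b => [a|//] [b|//] pp _ _ /eqP; rewrite -PoszM eqz_nat => /eqP ab.
have /(primeP pp).2 : (a %| p)%N by rewrite -ab dvdn_mulr.
case/orP=> /eqP a_eq; [left | right]; congr Posz => //.
by apply/eqP; rewrite -(eqn_pmul2l (prime_gt0 pp)) -{1}a_eq ab muln1.
Qed.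

Lemma int_mul_eq_prime_sq (a b : int) (p : nat) : prime p -> 0 <= a -> 0 <= b ->
  a * b = p%:Z ^+ 2 -> [\/ a = 1, a = p%:Z | a = p%:Z ^+ 2].
Proof.
have p2 : p%:Z ^+ 2 = (p ^ 2)%N :> int by rewrite -!natz natrX.
case: a b => [a|//] [b|//] pp _ _ /eqP; rewrite -PoszM p2 eqz_nat => /eqP ab.
have : (a %| p ^ 2)%N by rewrite -ab dvdn_mulr.
case/(dvdn_pfactor _ _ pp) => -[|[|[|k]]] // _ ->; rewrite ?expn1.
- exact: Or31.
- exact: Or32.
- by rewrite -p2; apply: Or33.
Qed.

Lemma sqr_le_of_bounds (w n : int) : - n <= w <= n -> w ^+ 2 <= n ^+ 2.
Proof.
move=> wn; have : 0 <= (n - w) * (n + w) by apply: mulr_ge0; lia.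
nia.
Qed.

Lemma bounds_of_sqr_lt (w n : int) : 0 <= n -> w ^+ 2 < n ^+ 2 -> - n < w < n.
Proof. nia. Qed.

Lemma exists_near_even_multiple (u n : int) : 0 < n ->
  exists k, - n <= u - 2 * n * k <= n.
Proof.
move=> n_gt0; have n2_gt0 : 0 < 2 * n by lia.
exists ((u + n) %/ (2 * n))%Z.
have := divz_eq (u + n) (2 * n).
have := modz_ge0 (u + n) (lt0r_neq0 n2_gt0); have := ltz_pmod (u + n) n2_gt0.
nia.
Qed.

(** * The ring H_{1,2,2} in coordinates *)

(* Coordinates of an element of H_{1,2,2} in the basis v1, v2, v3, v4. *)
Record H122 := H4 { h1 : int; h2 : int; h3 : int; h4 : int }.

Definition tuple_of_H122 x := (h1 x, h2 x, h3 x, h4 x).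
Definition H122_of_tuple (t : int * int * int * int) :=
  let: (a, b, c, d) := t in H4 a b c d.
Lemma tuple_of_H122K : cancel tuple_of_H122 H122_of_tuple. Proof. by case. Qed.
HB.instance Definition _ := Countable.copy H122 (can_type tuple_of_H122K).

Definition addH x y := H4 (h1 x + h1 y) (h2 x + h2 y) (h3 x + h3 y) (h4 x + h4 y).
Definition oppH x := H4 (- h1 x) (- h2 x) (- h3 x) (- h4 x).
(* Structure constants of the multiplication, read off from the products v_i v_j. *)
Definition mulH x y :=
  let: H4 a1 a2 a3 a4 := x in let: H4 b1 b2 b3 b4 := y in
  H4 (a1 * b1 - a2 * b2 - a2 * b3 - a3 * b3 - a4 * b2 - a4 * b3 - a4 * b4)
     (a1 * b2 + a2 * b1 + a2 * b4 + a3 * b2 + a3 * b4 - a4 * b3)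
     (a1 * b3 - a2 * b4 + a3 * b1 + a3 * b3 + a4 * b2 + a4 * b3)
     (a1 * b4 + a2 * b3 - a3 * b2 + a4 * b1 + a4 * b3 + a4 * b4).

Ltac H122_coords :=
  repeat match goal with x : H122 |- _ => destruct x end;
  rewrite /= ?/addH ?/oppH ?/mulH /=; try congr H4; ring.

Lemma addHA : associative addH. Proof. move=> x y z; H122_coords. Qed.
Lemma addHC : commutative addH. Proof. move=> x y; H122_coords. Qed.
Lemma add0H : left_id (H4 0 0 0 0) addH. Proof. move=> x; H122_coords. Qed.
Lemma addNH : left_inverse (H4 0 0 0 0) oppH addH. Proof. move=> x; H122_coords. Qed.
HB.instance Definition _ := GRing.isZmodule.Build H122 addHA addHC add0H addNH.

Lemma mulHA : associative mulH. Proof. move=> x y z; H122_coords. Qed.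
Lemma mul1H : left_id (H4 1 0 0 0) mulH. Proof. move=> x; H122_coords. Qed.
Lemma mulH1 : right_id (H4 1 0 0 0) mulH. Proof. move=> x; H122_coords. Qed.
Lemma mulHDl : left_distributive mulH addH. Proof. move=> x y z; H122_coords. Qed.
Lemma mulHDr : right_distributive mulH addH. Proof. move=> x y z; H122_coords. Qed.
Lemma oneH_neq0 : H4 1 0 0 0 != 0. Proof. by []. Qed.
HB.instance Definition _ :=
  GRing.Zmodule_isNzRing.Build H122 mulHA mul1H mulH1 mulHDl mulHDr oneH_neq0.

Lemma addHE x y : x + y = addH x y. Proof. by []. Qed.
Lemma oppHE x : - x = oppH x. Proof. by []. Qed.
Lemma mulHE x y : x * y = mulH x y. Proof. by []. Qed.

Definition conjH x := H4 (h1 x + h3 x + h4 x) (- h2 x) (- h3 x) (- h4 x).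
Definition normH x : int :=
  h1 x ^+ 2 + h2 x ^+ 2 + (h1 x + h2 x) * (h3 x + h4 x) + h3 x ^+ 2 + h4 x ^+ 2
  + h3 x * h4 x.

Ltac H122_ring := rewrite ?mulHE ?addHE ?oppHE ?/conjH ?/normH; H122_coords.

Lemma natr_H122 (n : nat) : n%:R = H4 n 0 0 0 :> H122.
Proof. by elim: n => [//|n IH]; rewrite mulrS IH addHE /addH /= intS. Qed.

Lemma intr_H122 (n : int) : n%:~R = H4 n 0 0 0 :> H122.
Proof.
case: n => n; first exact: natr_H122.
by rewrite NegzE intrN -pmulrn natr_H122 oppHE /oppH /= oppr0.
Qed.

Lemma intrM_H122 (n : int) (x : H122) :
  n%:~R * x = H4 (n * h1 x) (n * h2 x) (n * h3 x) (n * h4 x).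
Proof. rewrite intr_H122; H122_ring. Qed.

Lemma intrC_H122 (n : int) (x : H122) : n%:~R * x = x * n%:~R.
Proof. by rewrite mulrzl mulrzr. Qed.

Lemma intr_lreg_H122 (n : int) : n != 0 -> GRing.lreg (n%:~R : H122).
Proof.
move=> n0 [x1 x2 x3 x4] [y1 y2 y3 y4]; rewrite !intrM_H122 /= => -[].
by move=> /(mulfI n0) -> /(mulfI n0) -> /(mulfI n0) -> /(mulfI n0) ->.
Qed.

Section Norm.
Implicit Types x y : H122.

Lemma conjHK : involutive conjH. Proof. move=> x; H122_ring. Qed.
Lemma conjHM x y : conjH (x * y) = conjH y * conjH x. Proof. H122_ring. Qed.
Lemma conjH_intr (n : int) : conjH n%:~R = n%:~R.
Proof. rewrite intr_H122; H122_ring. Qed.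

Lemma mulH_conj x : x * conjH x = (normH x)%:~R.
Proof. rewrite intr_H122; H122_ring. Qed.
Lemma conjH_mul x : conjH x * x = (normH x)%:~R.
Proof. rewrite intr_H122; H122_ring. Qed.

Lemma normHM x y : normH (x * y) = normH x * normH y. Proof. H122_ring. Qed.
Lemma normH_conj x : normH (conjH x) = normH x. Proof. H122_ring. Qed.
Lemma normH_intr (n : int) : normH n%:~R = n ^+ 2.
Proof. rewrite intr_H122; H122_ring. Qed.

Lemma normH_sum_squares x :
  4 * normH x = (2 * h1 x + h3 x + h4 x) ^+ 2 + (2 * h2 x + h3 x + h4 x) ^+ 2
                + 2 * h3 x ^+ 2 + 2 * h4 x ^+ 2.
Proof. rewrite /normH; ring. Qed.

Lemma normH_ge0 x : 0 <= normH x.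
Proof. have := normH_sum_squares x; nia. Qed.

Lemma normH_eq0 x : (normH x == 0) = (x == 0).
Proof.
apply/eqP/eqP => [|->]; last by [].
have := normH_sum_squares x; case: x => x1 x2 x3 x4 /= n4 n0.
have x3_0 : x3 = 0 by nia.
have x4_0 : x4 = 0 by nia.
have x1_0 : x1 = 0 by nia.
have x2_0 : x2 = 0 by nia.
by rewrite x1_0 x2_0 x3_0 x4_0.
Qed.

Lemma normH_gt0 x : x != 0 -> 0 < normH x.
Proof. by rewrite -normH_eq0 lt_def normH_ge0 andbT. Qed.

Lemma normH_lreg x : normH x != 0 -> GRing.lreg x.
Proof.
move=> nx y z xy_xz; apply: (intr_lreg_H122 nx).
by rewrite -conjH_mul -!mulrA xy_xz.
Qed.

End Norm.

Definition invH x := if normH x == 1 then conjH x else x.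

Lemma mulVH : {in [pred x | normH x == 1], left_inverse 1 invH *%R}.
Proof. by move=> x /eqP x1; rewrite /invH x1 eqxx conjH_mul x1. Qed.

Lemma mulHV : {in [pred x | normH x == 1], right_inverse 1 invH *%R}.
Proof. by move=> x /eqP x1; rewrite /invH x1 eqxx mulH_conj x1. Qed.

Lemma normH_invertible x y : y * x = 1 /\ x * y = 1 -> normH x == 1.
Proof.
case=> _ xy; apply/eqP; apply: (int_mul_eq1 (normH_ge0 x) (normH_ge0 y)).
by rewrite -normHM xy -[1]/(1%:~R) normH_intr expr1n.
Qed.

Lemma invH_out : {in [predC [pred x | normH x == 1]], invH =1 id}.
Proof. by move=> x; rewrite !inE /invH => /negPf ->. Qed.

HB.instance Definition _ := GRing.NzRing_hasMulInverse.Build H122 mulVH mulHV normH_invertible invH_out.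

Lemma unitHE x : (x \is a GRing.unit) = (normH x == 1).
Proof. by []. Qed.

(** * Euclidean division and left gcds *)

(* Round the v3, v4 coordinates first: the v1, v2 coordinates of the remainder
   enter the norm only through 2 r1 + r3 + r4 and 2 r2 + r3 + r4. *)
Lemma exists_near_multiple_H122 (y : H122) (n : int) : 0 < n ->
  exists q, 4 * normH (y - n%:~R * q) <= 3 * n ^+ 2.
Proof.
move=> n_gt0.
have [q3 b3] := exists_near_even_multiple (2 * h3 y) n_gt0.
have [q4 b4] := exists_near_even_multiple (2 * h4 y) n_gt0.
pose s := h3 y - n * q3 + (h4 y - n * q4).
have [q1 b1] := exists_near_even_multiple (2 * h1 y + s) n_gt0.
have [q2 b2] := exists_near_even_multiple (2 * h2 y + s) n_gt0.
exists (H4 q1 q2 q3 q4).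
rewrite normH_sum_squares intrM_H122 addHE oppHE.
move: b1 b2 b3 b4; rewrite /s; clear s; case: y => y1 y2 y3 y4 /= b1 b2 b3 b4.
set r1 := y1 - n * q1; set r2 := y2 - n * q2.
set r3 := y3 - n * q3; set r4 := y4 - n * q4.
have w1 : (2 * r1 + r3 + r4) ^+ 2 <= n ^+ 2 by apply: sqr_le_of_bounds; lia.
have w2 : (2 * r2 + r3 + r4) ^+ 2 <= n ^+ 2 by apply: sqr_le_of_bounds; lia.
have w3 : (2 * r3) ^+ 2 <= n ^+ 2 by apply: sqr_le_of_bounds; lia.
have w4 : (2 * r4) ^+ 2 <= n ^+ 2 by apply: sqr_le_of_bounds; lia.
move: w1 w2 w3 w4; rewrite !exprMn; clearbody r1 r2 r3 r4; lia.
Qed.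

Lemma euclid_H122 (a b : H122) : b != 0 -> exists q, normH (a - b * q) < normH b.
Proof.
move=> /normH_gt0 n_gt0.
have [q approx] := exists_near_multiple_H122 (conjH b * a) n_gt0.
exists q.
have : conjH b * (a - b * q) = conjH b * a - (normH b)%:~R * q.
  by rewrite mulrBr mulrA conjH_mul.
move/(congr1 normH); rewrite normHM normH_conj => e.
rewrite -e in approx; rewrite -(ltr_pM2l n_gt0); nia.
Qed.

Definition lgcdH (a b d : H122) :=
  (exists a' b', a = d * a' /\ b = d * b') /\ exists x y, d = a * x + b * y.

Lemma lgcdH0 (a : H122) : lgcdH a 0 a.
Proof. by split; [exists 1, 0 | exists 1, 0]; rewrite ?mulr1 ?mulr0 ?mul0r ?addr0. Qed.

Lemma lgcdH_euclid_step (a b q d : H122) : lgcdH b (a - b * q) d -> lgcdH a b d.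
Proof.
case=> [[b' [r' [eb er]]] [x [y ed]]]; split.
  exists (b' * q + r'), b'; split=> //.
  by rewrite mulrDr mulrA -eb -er addrCA subrr addr0.
exists y, (x - q * y).
by rewrite ed mulrBr mulrBl !mulrA addrCA.
Qed.

Lemma lgcdH_exists (a b : H122) : exists d, lgcdH a b d.
Proof.
elim: {b}_.+1 {-2}b (ltnSn `|normH b|%N) a => // k IH b nb_lt a.
have [->|b0] := eqVneq b 0; first by exists a; apply: lgcdH0.
have [q r_lt] := euclid_H122 a b0.
have [|d hd] := IH (a - b * q) _ b; last by exists d; apply: lgcdH_euclid_step hd.
by have := normH_ge0 (a - b * q); lia.
Qed.

(** * Primary elements and residues modulo 4 *)

Definition iH : H122 := H4 0 1 0 0.
Definition v3H : H122 := H4 0 0 1 0.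

Definition dvd4H (x : H122) : bool :=
  [&& (4 %| h1 x)%Z, (4 %| h2 x)%Z, (4 %| h3 x)%Z & (4 %| h4 x)%Z].

Lemma dvd4HP x : reflect (exists h, x = 4%:~R * h) (dvd4H x).
Proof.
apply: (iffP and4P) => [[d1 d2 d3 d4]|[h ->]]; last by rewrite intrM_H122 /= !dvdz_mulr.
exists (H4 (h1 x %/ 4)%Z (h2 x %/ 4)%Z (h3 x %/ 4)%Z (h4 x %/ 4)%Z).
by rewrite intrM_H122 /= !(mulrC 4) !divzK //; case: x {d1 d2 d3 d4}.
Qed.

Lemma dvd4H_shift x y : dvd4H (x + 4%:~R * y) = dvd4H x.
Proof. by rewrite intrM_H122 addHE /dvd4H /= !rpredDr ?dvdz_mulr. Qed.

(* x = 2 (1 + i) h iff (1 - i) x = 4 h, because (1 - i) (1 + i) = 2. *)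
Definition inIH x := dvd4H ((1 - iH) * x).

Lemma inIHP x : reflect (exists h, x = 2%:~R * (1 + iH) * h) (inIH x).
Proof.
have gen_I : (1 - iH) * (2%:~R * (1 + iH)) = 4%:~R by vm_compute.
have lreg_1i : GRing.lreg (1 - iH) by apply: normH_lreg.
apply: (iffP (dvd4HP _)) => [[h e]|[h ->]]; exists h; last by rewrite mulrA gen_I.
by apply: lreg_1i; rewrite e mulrA gen_I.
Qed.

Lemma inIH_shift x y : inIH (x + 4%:~R * y) = inIH x.
Proof. by rewrite /inIH mulrDr mulrA -intrC_H122 -mulrA dvd4H_shift. Qed.

Definition primaryH x := inIH (x - 1) || inIH (x - (1 + 2%:~R * v3H)).

Lemma primaryH_shift x y : primaryH (x + 4%:~R * y) = primaryH x.
Proof.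
have shift e : x + 4%:~R * y - e = x - e + 4%:~R * y by rewrite addrAC.
by rewrite /primaryH !shift !inIH_shift.
Qed.

Lemma primaryH_shiftM x y t : primaryH ((x + 4%:~R * y) * t) = primaryH (x * t).
Proof. by rewrite mulrDl -mulrA primaryH_shift. Qed.

Definition oddH x := ~~ (2 %| normH x)%Z.

Lemma oddH_shift x y : oddH (x + 4%:~R * y) = oddH x.
Proof.
rewrite /oddH; have -> : normH (x + 4%:~R * y) =
          normH x + 2 * (2 * (normH (x + y) - normH x - normH y) + 8 * normH y).
  rewrite intrM_H122; H122_ring.
by rewrite rpredDr ?dvdz_mulr.
Qed.

Definition int_range (a : int) (n : nat) := [seq a + i%:Z | i <- iota 0 n].

Lemma mem_int_range (a : int) (n : nat) k : a <= k < a + n%:Z -> k \in int_range a n.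
Proof.
move=> k_in; apply/mapP; exists `|k - a|%N; last by lia.
by rewrite mem_iota; lia.
Qed.

Definition grid (r : seq int) : seq H122 :=
  flatten [seq [seq H4 a b c d | c <- r, d <- r] | a <- r, b <- r].

Lemma mem_grid r x :
  h1 x \in r -> h2 x \in r -> h3 x \in r -> h4 x \in r -> x \in grid r.
Proof.
case: x => a b c d /= ha hb hc hd; apply/flattenP.
exists [seq H4 a b c' d' | c' <- r, d' <- r].
  by apply/allpairsP; exists (a, b).
by apply/allpairsP; exists (c, d).
Qed.

Definition residues := grid (int_range 0 4).

Lemma mod4_invariant (P : pred H122) :
  (forall x y, P (x + 4%:~R * y) = P x) -> all P residues -> forall x, P x.
Proof.
move=> P_shift /allP P_res x.
have -> : x = H4 (h1 x %% 4)%Z (h2 x %% 4)%Z (h3 x %% 4)%Z (h4 x %% 4)%Z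
              + 4%:~R * H4 (h1 x %/ 4)%Z (h2 x %/ 4)%Z (h3 x %/ 4)%Z (h4 x %/ 4)%Z.
  by rewrite intrM_H122 addHE /addH /=; case: x => x1 x2 x3 x4 /=;
     congr H4; rewrite addrC mulrC -divz_eq.
rewrite P_shift; apply: P_res.
by apply: mem_grid; apply: mem_int_range; rewrite add0r modz_ge0 ?ltz_pmod.
Qed.

Definition units24 : seq H122 :=
  [:: H4 1 0 0 0; H4 (-1) 0 0 0; H4 0 1 0 0; H4 0 (-1) 0 0;
      H4 0 0 1 0; H4 0 0 (-1) 0; H4 0 0 0 1; H4 0 0 0 (-1);
      H4 1 0 (-1) 0; H4 (-1) 0 1 0; H4 1 0 0 (-1); H4 (-1) 0 0 1;
      H4 0 1 (-1) 0; H4 0 (-1) 1 0; H4 0 1 0 (-1); H4 0 (-1) 0 1;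
      H4 0 0 1 (-1); H4 0 0 (-1) 1; H4 1 1 (-1) 0; H4 (-1) (-1) 1 0;
      H4 1 1 0 (-1); H4 (-1) (-1) 0 1; H4 1 1 (-1) (-1); H4 (-1) (-1) 1 1].

Lemma units24_norm1 : all (fun t => normH t == 1) units24.
Proof. by vm_compute. Qed.

Lemma grid_norm1_units24 :
  all (fun t => (normH t == 1) ==> (t \in units24)) (grid (int_range (-2) 5)).
Proof. by vm_compute. Qed.

Lemma norm1_units24 t : normH t = 1 -> t \in units24.
Proof.
move=> t1; have := normH_sum_squares t; rewrite t1.
set w1 := 2 * h1 t + h3 t + h4 t; set w2 := 2 * h2 t + h3 t + h4 t.
have := sqr_ge0 w1; have := sqr_ge0 w2; have := sqr_ge0 (h3 t); have := sqr_ge0 (h4 t).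
move=> ? ? ? ? sum4.
have /bounds_of_sqr_lt b1 : w1 ^+ 2 < 3 ^+ 2 by lia.
have /bounds_of_sqr_lt b2 : w2 ^+ 2 < 3 ^+ 2 by lia.
have /bounds_of_sqr_lt b3 : h3 t ^+ 2 < 2 ^+ 2 by lia.
have /bounds_of_sqr_lt b4 : h4 t ^+ 2 < 2 ^+ 2 by lia.
have /allP /(_ t) := grid_norm1_units24; rewrite t1 eqxx; apply.
by apply: mem_grid; apply: mem_int_range; rewrite /w1 /w2 in b1 b2 *; lia.
Qed.

Lemma residues_primary_odd : all (fun d => primaryH d ==> oddH d) residues.
Proof. by vm_compute. Qed.

Lemma residues_odd_primary_assoc :
  all (fun d => oddH d ==> has (fun t => primaryH (d * t)) units24) residues.
Proof. by vm_compute. Qed.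

Lemma residues_primary_assoc_unique :
  all (fun d => primaryH d ==> all (fun t => primaryH (d * t) ==> (t == 1)) units24)
      residues.
Proof. by vm_compute. Qed.

Lemma primaryH_odd d : primaryH d -> oddH d.
Proof.
apply/implyP; move: d; apply: (mod4_invariant _ residues_primary_odd) => x y.
by rewrite primaryH_shift oddH_shift.
Qed.

Lemma odd_primary_assoc d :
  oddH d -> exists2 t, t \is a GRing.unit & primaryH (d * t).
Proof.
have : oddH d ==> has (fun t => primaryH (d * t)) units24.
  move: d; apply: (mod4_invariant _ residues_odd_primary_assoc) => x y.
  by rewrite oddH_shift (eq_has (primaryH_shiftM x y)).
move=> /implyP odd_has /odd_has /hasP [t t_unit dt_primary]; exists t => //.
by have /allP /(_ t t_unit) := units24_norm1.
Qed.

Lemma primary_assoc_unique d t :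
  primaryH d -> t \is a GRing.unit -> primaryH (d * t) -> t = 1.
Proof.
move=> d_primary; rewrite unitHE => /eqP /norm1_units24 t_unit dt_primary.
have : primaryH d ==> all (fun t => primaryH (d * t) ==> (t == 1)) units24.
  move: d {d_primary dt_primary}.
  apply: (mod4_invariant _ residues_primary_assoc_unique) => x y.
  by rewrite primaryH_shift; congr (_ ==> _); apply: eq_all => u; rewrite primaryH_shiftM.
by rewrite d_primary => /allP /(_ t t_unit); rewrite dt_primary => /eqP.
Qed.

(** * Left gcds of a primitive element and a rational prime *)

Definition contentH x := gcdz (gcdz (h1 x) (h2 x)) (gcdz (h3 x) (h4 x)).

Lemma dvdz_contentH (k : int) z : (k %| contentH (k%:~R * z))%Z.
Proof. by rewrite intrM_H122 /contentH /= !dvdz_gcd !dvdz_mulr. Qed.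

Lemma conjH_intrM (k : int) z : conjH (k%:~R * z) = k%:~R * conjH z.
Proof. by rewrite conjHM conjH_intr intrC_H122. Qed.

Lemma lgcdH_right_assoc a b d d' : lgcdH a b d -> lgcdH a b d' -> exists w, d' = d * w.
Proof.
case=> [[a' [b' [ea eb]]] _] [_ [x [y ed']]].
by exists (a' * x + b' * y); rewrite ed' ea eb mulrDr !mulrA.
Qed.

Lemma lgcdH_mul_unit a b d t :
  t \is a GRing.unit -> lgcdH a b d -> lgcdH a b (d * t).
Proof.
move=> t_unit [[a' [b' [ea eb]]] [x [y ed]]]; split.
  by exists (t^-1 * a'), (t^-1 * b'); rewrite !mulrA mulrK.
by exists (x * t), (y * t); rewrite ed mulrDl !mulrA.
Qed.

Definition irreducibleH (d : H122) := [/\ d != 0, d \isn't a GRing.unit &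
  forall a b, d = a * b -> a \is a GRing.unit \/ b \is a GRing.unit].

Lemma irreducibleH_norm_prime d (p : nat) : prime p -> normH d = p -> irreducibleH d.
Proof.
move=> p_prime nd; have p_gt1 := prime_gt1 p_prime.
split; first by rewrite -normH_eq0 nd; lia.
  by rewrite unitHE nd; lia.
move=> a b ed; rewrite !unitHE.
have := int_mul_eq_prime p_prime (normH_ge0 a) (normH_ge0 b).
by rewrite -normHM -ed => /(_ nd) [] ->; [left|right].
Qed.

Section PrimitiveNorm.
Variables (c : H122) (p : nat) (m : int).
Hypothesis c_primitive : contentH c = 1.
Hypothesis p_prime : prime p.
Hypothesis normH_c : normH c = p%:Z * m.

Let p_neq0 : p%:Z != 0. Proof. by have := prime_gt1 p_prime; lia. Qed.

Lemma primitive_not_scaled z : c <> p%:~R * z.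
Proof.
move=> ec; have := dvdz_contentH p z; rewrite -ec c_primitive dvdz1.
by have := prime_gt1 p_prime; lia.
Qed.

(* If d were a unit, then conj(c) = conj(c) d conj(d) would be divisible by p,
   as conj(c) (c x + p y) = p (m x + conj(c) y). *)
Lemma normH_lgcdH d : lgcdH c p%:~R d -> normH d = p.
Proof.
case=> [[a' [b' [ea eb]]] [x [y ed]]].
have nd_nb : normH d * normH b' = p%:Z ^+ 2 by rewrite -normHM -eb normH_intr.
case: (int_mul_eq_prime_sq p_prime (normH_ge0 d) (normH_ge0 b') nd_nb) => [d1|//|dp2].
- have cd : conjH c * d = p%:~R * (m%:~R * x + conjH c * y).
    rewrite ed mulrDr mulrA conjH_mul normH_c intrM -!mulrA mulrDr; congr (_ + _).
    by rewrite mulrA -intrC_H122 -mulrA.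
  have : conjH c = p%:~R * ((m%:~R * x + conjH c * y) * conjH d).
    by rewrite mulrA -cd -mulrA mulH_conj d1 mulr1.
  by move/(congr1 conjH); rewrite conjHK conjH_intrM => /primitive_not_scaled.
- have b1 : normH b' = 1.
    by apply: (mulfI (expf_neq0 2 p_neq0)); rewrite mulr1 -{1}dp2.
  have ed' : d = p%:~R * conjH b' by rewrite eb -mulrA mulH_conj b1 mulr1.
  by exfalso; apply: (@primitive_not_scaled (conjH b' * a')); rewrite mulrA -ed'.
Qed.

Hypothesis c_primary : primaryH c.

Lemma primary_lgcdH_exists_unique :
  exists d, [/\ lgcdH c p%:~R d, primaryH d &
              forall d', lgcdH c p%:~R d' -> primaryH d' -> d' = d].
Proof.
have [d0 hd0] := lgcdH_exists c p%:~R.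
have d0_odd : oddH d0.
  rewrite /oddH (normH_lgcdH hd0); apply: contra (primaryH_odd c_primary) => p_even.
  by rewrite normH_c dvdz_mulr.
have [t t_unit d0t_primary] := odd_primary_assoc d0_odd.
have hd := lgcdH_mul_unit t_unit hd0.
exists (d0 * t); split=> // d' hd' d'_primary.
have [w ew] := lgcdH_right_assoc hd hd'.
have w_unit : w \is a GRing.unit.
  rewrite unitHE; apply/eqP/(mulfI p_neq0).
  by rewrite mulr1 -{1}(normH_lgcdH hd) -normHM -ew (normH_lgcdH hd').
by rewrite ew (primary_assoc_unique d0t_primary w_unit) ?mulr1 // -ew.
Qed.

End PrimitiveNorm.

(** * Back to the quaternions *)

Definition quat_of (x : H122) : quat := comb (h1 x) (h2 x) (h3 x) (h4 x).

Lemma sqrt2_sq : s2 ^+ 2 = 2.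
Proof. by rewrite sqr_sqrtr // ler0n. Qed.

Lemma sqrt2_neq0 : s2 != 0.
Proof. by apply: contra_eq_neq sqrt2_sq => ->; rewrite expr0n /= eq_sym pnatr_eq0. Qed.

Lemma eq_mod_sqrt2 (a b k : RR) : a - b = k * (s2 ^+ 2 - 2) -> a = b.
Proof. by rewrite sqrt2_sq subrr mulr0 => /eqP; rewrite subr_eq0 => /eqP. Qed.

Lemma quat_ofE x : quat_of x =
  Quat ((h1 x)%:~R + ((h3 x)%:~R + (h4 x)%:~R) / 2)
       ((h2 x)%:~R + ((h3 x)%:~R + (h4 x)%:~R) / 2)
       ((h3 x)%:~R * s2 / 2) ((h4 x)%:~R * s2 / 2).
Proof.
rewrite /quat_of /comb /qadd /qzmul /v1 /v2 /v3 /v4 /qone /qscal /qi /=.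
by congr Quat; field.
Qed.

Lemma quat_of_inj : injective quat_of.
Proof.
have s2_half : s2 / 2 != 0 by rewrite mulf_neq0 ?invr_eq0 ?pnatr_eq0 ?sqrt2_neq0.
move=> x y; rewrite !quat_ofE -!mulrA => -[e1 e2].
move=> /(mulIf s2_half)/intr_inj e3 /(mulIf s2_half)/intr_inj e4.
rewrite e3 e4 in e1 e2; move/addIr/intr_inj: e1; move/addIr/intr_inj: e2.
by case: x y e3 e4 => ? ? ? ? [? ? ? ?] /= -> -> -> ->.
Qed.

Ltac quat_coords :=
  rewrite ?mulHE ?addHE ?oppHE ?intr_H122 /conjH /qconj /qmul /qadd /qopp /qscal /qzmul;
  rewrite ?quat_ofE /=; congr Quat; rewrite ?(intrD, intrB, intrN, intrM).

Lemma quat_ofD x y : quat_of (x + y) = qadd (quat_of x) (quat_of y).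
Proof. by case: x y => ? ? ? ? [? ? ? ?]; quat_coords; field. Qed.

Lemma quat_ofN x : quat_of (- x) = qopp (quat_of x).
Proof. by case: x => ? ? ? ?; quat_coords; field. Qed.

Lemma quat_ofB x y : quat_of (x - y) = qsub (quat_of x) (quat_of y).
Proof. by rewrite quat_ofD quat_ofN. Qed.

Lemma quat_ofM x y : quat_of (x * y) = qmul (quat_of x) (quat_of y).
Proof.
case: x y => x1 x2 x3 x4 [y1 y2 y3 y4]; quat_coords.
- by apply: (eq_mod_sqrt2 (k := (x3%:~R * y3%:~R + x4%:~R * y4%:~R) / 4)); field.
- by apply: (eq_mod_sqrt2 (k := (x4%:~R * y3%:~R - x3%:~R * y4%:~R) / 4)); field.
- by field.
- by field.
Qed.

Lemma quat_of_conj x : quat_of (conjH x) = qconj (quat_of x).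
Proof. by case: x => ? ? ? ?; quat_coords; field. Qed.

Lemma quat_of_intr (n : int) : quat_of n%:~R = qscal n%:~R.
Proof. by quat_coords; field. Qed.

Lemma quat_of_intrM (n : int) x : quat_of (n%:~R * x) = qzmul n (quat_of x).
Proof. by case: x => ? ? ? ?; rewrite intrM_H122; quat_coords; field. Qed.

Lemma quat_of1 : quat_of 1 = qone.
Proof. exact: (quat_of_intr 1). Qed.

Lemma quat_of0 : quat_of 0 = qzero.
Proof. exact: (quat_of_intr 0). Qed.

Lemma qN_quat_of x : qN (quat_of x) = qscal (normH x)%:~R.
Proof. by rewrite /qN -quat_of_conj -quat_ofM mulH_conj quat_of_intr. Qed.

Lemma inH_quat_of x : inH (quat_of x).
Proof. by exists (h1 x), (h2 x), (h3 x), (h4 x). Qed.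

Lemma inH_quat_ofP q : inH q -> exists x, q = quat_of x.
Proof. by case=> [a [b [c [d ->]]]]; exists (H4 a b c d). Qed.

Lemma unitH_quat_of u : unitH (quat_of u) <-> u \is a GRing.unit.
Proof.
split=> [[_ [v [/inH_quat_ofP [v' ->]]]]|u_unit].
  rewrite -!quat_ofM -quat_of1 => -[/quat_of_inj uv /quat_of_inj vu].
  by apply/unitrP; exists v'.
split; first exact: inH_quat_of.
exists (quat_of u^-1); split; first exact: inH_quat_of.
by rewrite -!quat_ofM mulrV ?mulVr ?quat_of1.
Qed.

Lemma primeH_quat_of d : irreducibleH d -> primeH (quat_of d).
Proof.
case=> d_neq0 d_nonunit d_irr; split; first exact: inH_quat_of.
split; first by rewrite -quat_of0 => /quat_of_inj /eqP; apply/negP.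
split; first by move/unitH_quat_of; apply/negP.
move=> _ _ /inH_quat_ofP [a ->] /inH_quat_ofP [b ->].
by rewrite -quat_ofM => /quat_of_inj /d_irr; rewrite !unitH_quat_of.
Qed.

Lemma lgcd_quat_ofP a b d :
  lgcd (quat_of a) (quat_of b) d -> exists2 d0, d = quat_of d0 & lgcdH a b d0.
Proof.
case=> /inH_quat_ofP [d0 ->] [[a' [b' [/inH_quat_ofP [a0 ->] [/inH_quat_ofP [b0 ->]]]]]].
rewrite -!quat_ofM => -[/quat_of_inj ea /quat_of_inj eb].
case=> x [y [/inH_quat_ofP [x0 ->] [/inH_quat_ofP [y0 ->]]]].
rewrite -!quat_ofM -quat_ofD => /quat_of_inj ed.
by exists d0 => //; split; [exists a0, b0 | exists x0, y0].
Qed.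

Lemma quat_of_lgcd a b d : lgcdH a b d -> lgcd (quat_of a) (quat_of b) (quat_of d).
Proof.
case=> [[a' [b' [ea eb]]] [x [y ed]]]; split; first exact: inH_quat_of.
split.
  exists (quat_of a'), (quat_of b'); rewrite -!quat_ofM -ea -eb.
  by do !split; apply: inH_quat_of.
exists (quat_of x), (quat_of y); rewrite -!quat_ofM -quat_ofD -ed.
by do !split; apply: inH_quat_of.
Qed.

Lemma quat_of_iH : quat_of iH = qi.
Proof. by rewrite quat_ofE /qi /=; congr Quat; field. Qed.

Lemma quat_of_v3H : quat_of v3H = v3.
Proof. by rewrite quat_ofE /v3 /=; congr Quat; field. Qed.

Lemma inI_quat_of x : inI (quat_of x) <-> inIH x.
Proof.
have gen : qzmul 2 (qadd qone qi) = quat_of (2%:~R * (1 + iH)).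
  by rewrite quat_of_intrM quat_ofD quat_of1 quat_of_iH.
rewrite /inI gen; split=> [[_ [/inH_quat_ofP [h ->]]]|/inIHP [h ->]].
  by rewrite -quat_ofM => /quat_of_inj ex; apply/inIHP; exists h.
by exists (quat_of h); rewrite quat_ofM; split; first exact: inH_quat_of.
Qed.

Lemma primary_quat_of x : primary (quat_of x) <-> primaryH x.
Proof.
rewrite /primary /primaryH -quat_of1 -quat_of_v3H -quat_of_intrM -quat_ofD.
rewrite -!quat_ofB !inI_quat_of.
by split=> [[]|/orP[]] ->; rewrite ?orbT //; [left | right].
Qed.

Theorem lemma51 (c : quat) (p : nat) :
  inH c -> primitive c -> prime p ->
  (exists m : int, qN c = qscal (((p%:Z * m)%:~R : RR))) ->
  (forall d, lgcd c (qscal p%:R) d -> primeH d) /\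
  (exists d, (lgcd c (qscal p%:R) d /\ primary d) /\
     forall d', lgcd c (qscal p%:R) d' /\ primary d' -> d' = d).
Proof.
move=> /inH_quat_ofP [c0 ->] [/primary_quat_of c0_primary [c1 [c2 [c3 [c4 [ec0 c0_prim]]]]]].
move=> p_prime [m]; rewrite qN_quat_of => -[/intr_inj normH_c0].
have {ec0 c0_prim} c0_primitive : contentH c0 = 1.
  by have -> : c0 = H4 c1 c2 c3 c4 by apply: quat_of_inj.
have -> : qscal p%:R = quat_of p%:~R by rewrite quat_of_intr.
have normH_lgcd := normH_lgcdH c0_primitive p_prime normH_c0.
split=> [d /lgcd_quat_ofP [d0 -> /normH_lgcd hd0]|].
  exact/primeH_quat_of/(irreducibleH_norm_prime p_prime).
have [d [hd d_primary d_unique]] :=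
  primary_lgcdH_exists_unique c0_primitive p_prime normH_c0 c0_primary.
exists (quat_of d); split; first by split; [exact: quat_of_lgcd | exact/primary_quat_of].
by move=> _ [/lgcd_quat_ofP [d' -> hd'] /primary_quat_of /(d_unique d' hd') ->].
Qed.
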